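(* Let $G$ be a $2K_2$-free graph, let $a,b$ be adjacent vertices of $G$, and let $X$ be a minimal dominating set of $G$ with $a,b\in X$ and $|X|>\alpha(G)$. Let $A$ be the set of vertices not in $\{a,b\}$ adjacent to neither $a$ nor $b$, let $N$ be the set of vertices not in $\{a,b\}$ adjacent to at least one of $a,b$, let $Y=X\cap N$, and let $Z$ be the set of vertices of $A$ having at least one neighbour in $Y$. Then $|Y|=|Z|$ and every vertex of $Z$ is a private neighbour (with respect to $X$) of some vertex of $Y$.
   Context: All graphs are finite, simple and undirected. $2K_2$-free means no induced subgraph isomorphic to the disjoint union of two edges. $\alpha(G)$ is the maximum size of an independent set of $G$. A dominating set is a vertex set $D$ such that every vertex outside $D$ has a neighbour in $D$; it is minimal if no proper subset is dominating. Given a dominating set $D$ and $x\in D$, a vertex $y\notin D$ is a private neighbour of $x$ if $x$ is the only neighbour of $y$ in $D$. *)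

From mathcomp Require Import all_boot.
Set Implicit Arguments. Unset Strict Implicit. Unset Printing Implicit Defensive.

Section Graph.
Variable T : finType.
Variable e : rel T.

Definition simple_graph : Prop := symmetric e /\ irreflexive e.

Definition twoK2_free : Prop :=
  forall u v w x : T, e u v -> e w x ->
    ~~ e u w -> ~~ e u x -> ~~ e v w -> ~~ e v x ->
    u = w \/ u = x \/ v = w \/ v = x.

Definition independent (S : {set T}) : bool :=
  [forall x in S, forall y in S, ~~ e x y].

Definition alpha : nat := \max_(S : {set T} | independent S) #|S|.

Definition dominating (D : {set T}) : bool :=
  [forall y, (y \in D) || [exists x in D, e x y]].

Definition minimal_dominating (D : {set T}) : bool :=
  dominating D && [forall D' : {set T}, (D' \proper D) ==> ~~ dominating D'].

Definition private_nb (D : {set T}) (x y : T) : bool :=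
  (y \notin D) && e x y && [forall z in D, e z y ==> (z == x)].

End Graph.

(* Every y in Y has a neighbour (a or b) inside X, so by minimality it has a
   private neighbour f y outside X; as a, b are in X, f y lies in the set A of
   vertices far from the edge ab.  Because G is 2K2-free, a |: A is independent,
   so #|A| < alpha < #|X| <= 2 + #|Y| + #|X :&: A|, i.e. the injection f maps Y
   onto A :\: X.  A vertex z of Z lying in X would itself have a private
   neighbour in A :\: X, hence be some y in Y by uniqueness of the owner of a
   private neighbour, which is absurd; so Z = A :\: X = f @: Y. *)
From mathcomp Require Import all_boot.
From mathcomp Require Import zify.
Set Implicit Arguments. Unset Strict Implicit. Unset Printing Implicit Defensive.

Section PrivateNeighbours.
Variables (T : finType) (e : rel T).
Implicit Types (X : {set T}) (x y v w : T).

Lemma private_nb_notin X x v : private_nb e X x v -> v \notin X.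
Proof. by case/andP=> /andP[]. Qed.

Lemma private_nb_adj X x v : private_nb e X x v -> e x v.
Proof. by case/andP=> /andP[]. Qed.

Lemma private_nb_unique X x y v :
  private_nb e X x v -> y \in X -> e y v -> y = x.
Proof. by case/andP=> _ /forallP/(_ y) + yX eyv; rewrite yX eyv => /eqP. Qed.

Lemma minimal_dominating_private_nb X x w :
  minimal_dominating e X -> x \in X -> w \in X -> w != x -> e w x ->
  exists v, private_nb e X x v.
Proof.
case/andP=> /forallP domX /forallP minX xX wX wx ewx.
have := minX (X :\ x); rewrite properD1 // /dominating negb_forall.
case/existsP=> v; rewrite negb_or => /andP[vXx /existsPn vfar].
have nadj u : u \in X -> u != x -> ~~ e u v.
  by move=> uX ux; move: (vfar u); rewrite !inE ux uX.
have vx : v != x by apply: contraNneq (nadj w wX wx) => ->.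
have vX : v \notin X by move: vXx; rewrite !inE vx.
have [z zX ezv] : exists2 z, z \in X & e z v.
  by move: (domX v); rewrite (negbTE vX) => /existsP[z /andP[]]; exists z.
have zx : z = x by apply/eqP; apply: contraTT ezv; apply: nadj.
exists v; rewrite /private_nb vX -zx ezv /=; apply/forallP=> u.
by apply/implyP=> uX; apply/implyP; apply: contraTT; rewrite zx; apply: nadj.
Qed.

Definition some_private_nb X x := odflt x [pick v | private_nb e X x v].

Lemma some_private_nbP X x :
  (exists v, private_nb e X x v) -> private_nb e X x (some_private_nb X x).
Proof. by case=> v pv; rewrite /some_private_nb; case: pickP => // /(_ v); rewrite pv. Qed.

End PrivateNeighbours.

Section EdgeNeighbourhood.
Variables (T : finType) (e : rel T) (a b : T).

Definition edge_far := [set v | (v != a) && (v != b) && ~~ e a v && ~~ e b v].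
Definition edge_near := [set v | (v != a) && (v != b) && (e a v || e b v)].

Lemma edge_far_near v : v \in edge_far -> v \notin edge_near.
Proof. by rewrite !inE -!andbA => /and4P[_ _ /negbTE-> /negbTE->]; rewrite !andbF. Qed.

Lemma private_nb_edge_far (X : {set T}) x v :
  a \in X -> b \in X -> x != a -> x != b -> private_nb e X x v ->
  v \in edge_far :\: X.
Proof.
move=> aX bX xa xb pv; have vX := private_nb_notin pv.
have far u : u \in X -> u != x -> ~~ e u v.
  by move=> uX; apply: contra => euv; rewrite (private_nb_unique pv uX euv).
have [va vb] : v != a /\ v != b by split; apply: contraNneq vX => ->.
by rewrite !inE vX va vb !far // eq_sym.
Qed.

Lemma card_edge_partition (S : {set T}) :
  #|S| <= 2 + #|S :&: edge_near| + #|S :&: edge_far|.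
Proof.
have coverS : S \subset [set a; b] :|: (S :&: edge_near) :|: (S :&: edge_far).
  apply/subsetP=> x xS; rewrite !inE xS /=.
  by case: (x =P a); case: (x =P b); case: (e a x); case: (e b x).
apply: (leq_trans (subset_leq_card coverS)).
apply: leq_trans (leq_card_setU _ _) _; rewrite leq_add2r.
apply: leq_trans (leq_card_setU _ _) _; rewrite leq_add2r cards2.
by case: (a != b).
Qed.

Hypotheses (e_sym : symmetric e) (e_irr : irreflexive e).
Hypotheses (e_2K2 : twoK2_free e) (eab : e a b).

Lemma independent_setU1_edge_far : independent e (a |: edge_far).
Proof.
have farP x : x \in edge_far -> [/\ x != a, x != b, ~~ e x a & ~~ e x b].
  by rewrite inE -!andbA (e_sym a) (e_sym b) => /and4P[].
apply/forallP=> x; apply/implyP; rewrite in_setU1 => xI.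
apply/forallP=> y; apply/implyP; rewrite in_setU1.
case/orP: xI => [/eqP-> | /farP[xa xb nxa nxb]].
  by case/orP=> [/eqP-> | /farP[_ _ nya _]]; rewrite ?e_irr // e_sym.
case/orP=> [/eqP-> // | /farP[ya yb nya nyb]].
apply/negP=> exy; have := e_2K2 exy eab nxa nxb nya nyb.
by case=> [|[|[]]] /eqP; rewrite ?(negbTE xa) ?(negbTE xb) ?(negbTE ya) ?(negbTE yb).
Qed.

Lemma card_edge_far_lt_alpha : #|edge_far| < alpha e.
Proof.
have a_far : a \notin edge_far by rewrite inE eqxx.
have := leq_bigmax_cond (F := fun S : {set T} => #|S|) _ independent_setU1_edge_far.
by rewrite cardsU1 a_far.
Qed.

Lemma card_edge_far_setD (X : {set T}) :
  alpha e < #|X| -> #|edge_far :\: X| <= #|X :&: edge_near|.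
Proof.
move=> ltX; have := card_edge_partition X.
have := cardsID X edge_far; rewrite setIC.
have := card_edge_far_lt_alpha; lia.
Qed.

End EdgeNeighbourhood.

Section MinimalDominatingEdge.
Variables (T : finType) (e : rel T) (a b : T) (X : {set T}).
Hypotheses (e_sym : symmetric e) (e_irr : irreflexive e).
Hypotheses (e_2K2 : twoK2_free e) (eab : e a b).
Hypotheses (mdX : minimal_dominating e X) (aX : a \in X) (bX : b \in X).
Hypothesis ltX : alpha e < #|X|.

Let Y := X :&: edge_near e a b.
Let f := some_private_nb e X.

Lemma edge_near_private_nb y : y \in Y -> private_nb e X y (f y).
Proof.
rewrite !inE -!andbA => /and4P[yX ya yb /orP[ey|ey]]; apply/some_private_nbP;
  by apply: minimal_dominating_private_nb ey; rewrite // eq_sym.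
Qed.

Lemma edge_near_private_nb_inj : {in Y &, injective f}.
Proof.
move=> y y' yY y'Y fy; have yX : y \in X by case/setIP: yY.
apply: private_nb_unique (edge_near_private_nb y'Y) yX _.
by rewrite -fy (private_nb_adj (edge_near_private_nb yY)).
Qed.

Lemma imset_edge_near_private_nb : f @: Y = edge_far e a b :\: X.
Proof.
apply/eqP; rewrite eqEcard card_in_imset ?card_edge_far_setD //; last first.
  exact: edge_near_private_nb_inj.
rewrite andbT; apply/subsetP=> _ /imsetP[y yY ->].
have /setIP[_] := yY; rewrite inE -!andbA => /and3P[ya yb _].
exact: private_nb_edge_far aX bX ya yb (edge_near_private_nb yY).
Qed.

Lemma edge_far_setD_private_nb v :
  v \in edge_far e a b :\: X -> exists2 y, y \in Y & private_nb e X y v.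
Proof.
rewrite -imset_edge_near_private_nb => /imsetP[y yY ->].
by exists y; last exact: edge_near_private_nb.
Qed.

Lemma edge_far_adj_notin z y : z \in edge_far e a b -> y \in X -> e y z -> z \notin X.
Proof.
move=> zA yX eyz; apply/negP=> zX.
have zy : y != z by apply: contraTneq eyz => ->; rewrite e_irr.
have [q pq] := minimal_dominating_private_nb mdX zX yX zy eyz.
have [za zb] : z != a /\ z != b by move: zA; rewrite inE -!andbA => /and4P[].
have [y' y'Y py'q] := edge_far_setD_private_nb (private_nb_edge_far aX bX za zb pq).
have zy' := private_nb_unique py'q zX (private_nb_adj pq).
by case/setIP: y'Y => _; rewrite -zy' (negbTE (edge_far_near zA)).
Qed.

End MinimalDominatingEdge.

Theorem claim3 (T : finType) (e : rel T) (a b : T) (X : {set T}) :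
  simple_graph e -> twoK2_free e -> e a b ->
  minimal_dominating e X -> a \in X -> b \in X -> alpha e < #|X| ->
  let A := [set v | (v != a) && (v != b) && ~~ e a v && ~~ e b v] in
  let N := [set v | (v != a) && (v != b) && (e a v || e b v)] in
  let Y := X :&: N in
  let Z := [set z in A | [exists y in Y, e y z]] in
  #|Y| = #|Z| /\ (forall z, z \in Z -> exists2 y, y \in Y & private_nb e X y z).
Proof.
move=> [e_sym e_irr] e_2K2 eab mdX aX bX ltX A N Y Z.
have far_private := edge_far_setD_private_nb e_sym e_irr e_2K2 eab mdX aX bX ltX.
have ZE : Z = A :\: X.
  apply/setP=> z; rewrite in_setD; apply/setIdP/andP=> -[zA].
    case/existsP=> y /andP[/setIP[yX _] eyz]; split=> //.
    exact: (edge_far_adj_notin e_sym e_irr e_2K2 eab mdX aX bX ltX zA yX eyz).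
  move=> zX; have [|y yY pyz] := far_private z; first by rewrite in_setD zA zX.
  by split=> //; apply/existsP; exists y; rewrite yY (private_nb_adj pyz).
split; last by move=> z; rewrite ZE; apply: far_private.
rewrite ZE -(imset_edge_near_private_nb e_sym e_irr e_2K2 eab mdX aX bX ltX).
by rewrite card_in_imset //; apply: edge_near_private_nb_inj.
Qed.
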